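(* Let $\xi$ be an American option and let $\mathcal{Z}^{\mathrm{bd}}_0$ be given by the construction in the context. Then \[ \mathcal{Z}^{\mathrm{bd}}_0=\{x\in\mathbb{R}^d:\exists(y,\chi)\in\Phi^{\mathrm{bg}}(\xi),\ x=y_0\}, \] and for each $j=1,\ldots,d$ the bid price satisfies $\pi^{\mathrm{bg}}_j(\xi)=\max\{-x\in\mathbb{R}: xe^j\in\mathcal{Z}^{\mathrm{bd}}_0\}$ (the maximum being attained). Moreover, there exists $(y,\chi)\in\Phi^{\mathrm{bg}}(\xi)$ with $\pi^{\mathrm{bg}}_j(\xi)e^j=-y_0$.
   Context: Finite filtered probability space $(\Omega,\mathcal{F},\mathbb{P};(\mathcal{F}_t)_{t=0}^T)$, $\mathcal{F}_0$ trivial, $\mathcal{F}_T=2^\Omega$, $\mathbb{P}(\{\omega\})>0$. $\Omega_t$: atoms (nodes) of $\mathcal{F}_t$; $\mathrm{succ}\,\mu=\{\nu\in\Omega_{t+1}:\nu\subseteq\mu\}$. $\mathcal{L}_t$: $\mathcal{F}_t$-measurable $\mathbb{R}^d$-valued random variables. $d$ assets, $\mathcal{F}_t$-measurable exchange rates $\pi^{jk}_t>0$, $\pi^{jj}_t=1$. $\mathcal{K}^\mu_t$: convex cone generated by $e^1,\ldots,e^d$ and $\pi^{jk}_t(\mu)e^j-e^k$; $\mathcal{K}_t=\{x\in\mathcal{L}_t:x(\mu)\in\mathcal{K}^\mu_t\ \forall\mu\}$. Deferred solvency cone $\mathcal{Q}_t$: $z\in\mathcal{L}_t$ for which there exist $y_{t+1},\ldots,y_{T+1}$,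 $y_s\in\mathcal{L}_{s-1}$, $y_{T+1}=0$, with $z-y_{t+1}\in\mathcal{K}_t$, $y_s-y_{s+1}\in\mathcal{K}_s$ ($s>t$); $\mathcal{Q}^\mu_t=\{z(\mu):z\in\mathcal{Q}_t\}$. Trading strategies $\Phi$: $y=(y_t)_{t=0}^{T+1}$, $y_0\in\mathbb{R}^d$, $y_t\in\mathcal{L}_{t-1}$, $y_{T+1}=0$. Mixed stopping times $\mathcal{X}$: adapted $[0,1]$-valued $\chi$ with $\sum_{t=0}^T\chi_t=1$. American option: adapted $\mathbb{R}^d$-valued $\xi$. $\Phi^{\mathrm{bg}}(\xi)$: set of pairs $(y,\chi)\in\Phi\times\mathcal{X}$ with $y_t+\chi_t\xi_t-y_{t+1}\in\mathcal{K}_t$ for each $t=0,\ldots,T$. Bid price: $\pi^{\mathrm{bg}}_j(\xi)=\sup\{-x\in\mathbb{R}:\exists(y,\chi)\in\Phi^{\mathrm{bg}}(\xi),\ xe^j=y_0\}$. Construction (nodewise): $\mathcal{U}^{\mathrm{bd}\mu}_t=-\xi_t(\mu)+\mathcal{Q}^\mu_t$; at $T$: $\mathcal{Z}^{\mathrm{bd}\mu}_T=\mathcal{V}^{\mathrm{bd}\mu}_T=\mathcal{W}^{\mathrm{bd}\mu}_T=\mathcal{U}^{\mathrm{bd}\mu}_T$; for $t<T$: $\mathcal{W}^{\mathrm{bd}\mu}_t=\bigcap_{\nu\in\mathrm{succ}\,\mu}\mathcal{Z}^{\mathrm{bd}\nu}_{t+1}$, $\mathcal{V}^{\mathrm{bd}\mu}_t=\mathcal{W}^{\mathrm{bd}\mu}_t+\mathcal{Q}^\mu_t$,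 $\mathcal{Z}^{\mathrm{bd}\mu}_t=\mathrm{conv}\{\mathcal{U}^{\mathrm{bd}\mu}_t,\mathcal{V}^{\mathrm{bd}\mu}_t\}$. $\mathcal{Z}^{\mathrm{bd}}_0$ is the set at the root node. Standing assumption: no arbitrage (no $y\in\Phi$ with $y_0=0$, $y_t-y_{t+1}\in\mathcal{K}_t$ for $t<T$ and $y_T-x\in\mathcal{K}_T$ for a nonzero componentwise non-negative $x\in\mathcal{L}_T$). *)

From HB Require Import structures.
From mathcomp Require Import all_boot all_order all_algebra.
From mathcomp Require Import boolp classical_sets reals constructive_ereal ereal.

Set Implicit Arguments.
Unset Strict Implicit.
Unset Printing Implicit Defensive.

Import Order.TTheory GRing.Theory Num.Theory.
Local Open Scope ring_scope.
Local Open Scope classical_set_scope.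

Section Market.
Variables (R : realType) (d : nat) (Omega : finType) (T : nat).
(* filtration, given by the atoms (nodes) of F_t *)
Variable F : nat -> {set {set Omega}}.
Variable pi : nat -> Omega -> 'I_d -> 'I_d -> R.

Definition vec := 'rV[R]_d.

Definition e (j : 'I_d) : vec := delta_mx 0 j.

Definition meas {A : Type} (t : nat) (x : Omega -> A) : Prop :=
  forall mu, mu \in F t -> forall w1 w2, w1 \in mu -> w2 \in mu -> x w1 = x w2.

(* solvency cone K_t^mu evaluated at a scenario w (pi_t is F_t-measurable) *)
Definition inK (t : nat) (w : Omega) (v : vec) : Prop :=
  exists (a : 'I_d -> R) (b : 'I_d -> 'I_d -> R),
    (forall j, 0 <= a j) /\ (forall j k, 0 <= b j k) /\
    v = \sum_(j < d) a j *: e j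
        + \sum_(j < d) \sum_(k < d) b j k *: (pi t w j k *: e j - e k).

Definition inKrv (t : nat) (z : Omega -> vec) : Prop :=
  meas t z /\ forall w, inK t w (z w).

Definition inQ (t : nat) (z : Omega -> vec) : Prop :=
  meas t z /\
  exists y : nat -> Omega -> vec,
    (forall s, (t < s <= T.+1)%N -> meas s.-1 (y s)) /\
    (forall w, y T.+1 w = 0) /\
    (forall w, inK t w (z w - y t.+1 w)) /\
    (forall s, (t < s <= T)%N -> forall w, inK s w (y s w - y s.+1 w)).

Definition Qnode (t : nat) (mu : {set Omega}) : set vec :=
  [set v | exists z, inQ t z /\ forall w, w \in mu -> z w = v].

Definition conv (A : set vec) : set vec :=
  [set x | exists (n : nat) (p : 'I_n -> vec) (l : 'I_n -> R),
     (forall i, A (p i)) /\ (forall i, 0 <= l i) /\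
     \sum_(i < n) l i = 1 /\ x = \sum_(i < n) l i *: p i].

Definition setadd (A B : set vec) : set vec :=
  [set x | exists a b, A a /\ B b /\ x = a + b].

Variable xi : nat -> Omega -> vec.

Definition Ubd (t : nat) (mu : {set Omega}) : set vec :=
  [set v | exists q, Qnode t mu q /\ forall w, w \in mu -> v = - xi t w + q].

(* Zrec n t mu = Z^{bd mu}_t when n = T - t *)
Fixpoint Zrec (n t : nat) (mu : {set Omega}) : set vec :=
  match n with
  | 0 => Ubd t mu
  | n'.+1 =>
      let W := [set x | forall nu, nu \in F t.+1 -> nu \subset mu ->
                          Zrec n' t.+1 nu x] in
      conv (Ubd t mu `|` setadd W (Qnode t mu))
  end.

Definition Zbd0 : set vec := Zrec T 0 [set: Omega]%SET.

Definition is_strategy (y : nat -> Omega -> vec) : Prop :=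
  meas 0 (y 0%N) /\
  (forall t, (1 <= t <= T.+1)%N -> meas t.-1 (y t)) /\
  (forall w, y T.+1 w = 0).

Definition is_mst (chi : nat -> Omega -> R) : Prop :=
  (forall t, (t <= T)%N -> meas t (chi t)) /\
  (forall t w, (t <= T)%N -> 0 <= chi t w <= 1) /\
  (forall w, \sum_(t < T.+1) chi t w = 1).

Definition Phi_bg (y : nat -> Omega -> vec) (chi : nat -> Omega -> R) : Prop :=
  is_strategy y /\ is_mst chi /\
  forall t, (t <= T)%N -> forall w,
    inK t w (y t w + chi t w *: xi t w - y t.+1 w).

Definition init_bg : set vec :=
  [set x | exists y chi, Phi_bg y chi /\ forall w, y 0%N w = x].

Definition bid_price (j : 'I_d) : \bar R :=
  ereal_sup [set (- x)%:E | x in [set x : R | init_bg (x *: e j)]].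

End Market.

Section Hyps.
Variables (R : realType) (d : nat) (Omega : finType) (T : nat).
Variable F : nat -> {set {set Omega}}.
Variable pi : nat -> Omega -> 'I_d -> 'I_d -> R.

Definition filtered_space (P : Omega -> R) : Prop :=
  (forall w, 0 < P w) /\ \sum_w P w = 1 /\
  (forall t, (t <= T)%N -> finset.partition (F t) [set: Omega]%SET) /\
  (forall t, (t < T)%N -> forall nu, nu \in F t.+1 ->
       exists2 mu, mu \in F t & nu \subset mu) /\
  F 0%N = [set [set: Omega]]%SET /\
  F T = [set [set w] | w : Omega]%SET.

Definition rates_ok : Prop :=
  forall t, (t <= T)%N ->
    meas F t (pi t) /\
    (forall w j k, 0 < pi t w j k) /\ (forall w j, pi t w j j = 1).

Definition adapted (xi : nat -> Omega -> vec R d) : Prop :=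
  forall t, (t <= T)%N -> meas F t (xi t).

Definition no_arbitrage : Prop :=
  ~ exists (y : nat -> Omega -> vec R d) (x : Omega -> vec R d),
      is_strategy T F y /\ (forall w, y 0%N w = 0) /\
      (forall t, (t < T)%N -> forall w, inK pi t w (y t w - y t.+1 w)) /\
      meas F T x /\ (forall w i, 0 <= x w 0 i) /\ (exists w, x w != 0) /\
      (forall w, inK pi T w (y T w - x w)).
End Hyps.

(* A buyer's hedge seen from a node [mu] at time [t] either exercises there,
   or rebalances by an element of [Q_t^mu] and continues in every successor
   node, or randomizes between the two with weight [chi_t(mu)] on exercising.
   These three alternatives are exactly the sets [U], [W + Q] and their convex
   hull in the recursion, so [Z^bd_0] is the set of initial endowments of
   buyer's hedges.
   For the bid price, a hedge on the finite tree is the solution of a finite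
   linear system, so by Fourier-Motzkin elimination the set of [x] with
   [x e^j] in [Z^bd_0] is a closed half-line. It is nonempty, and bounded
   below: otherwise rescaled hedges would hedge [eps xi] from [-e^j] for all
   small [eps > 0], hence, by closedness, for [eps = 0], which is an
   arbitrage. *)

From Pilot Require Import Defs.
From HB Require Import structures.
From mathcomp Require Import all_boot all_order all_algebra.
From mathcomp Require Import boolp classical_sets reals constructive_ereal ereal.
From mathcomp Require Import ring lra zify.
Import Order.TTheory GRing.Theory Num.Theory.
Set Implicit Arguments.
Unset Strict Implicit.
Unset Printing Implicit Defensive.
Local Open Scope ring_scope.

Section FourierMotzkin.
Variables (R : realFieldType) (V : finType).

Definition upd (v : V -> R) k s : V -> R := fun u => if u == k then s else v u.

Definition slope (f : (V -> R) -> R) k := f (upd (fun=> 0) k 1) - f (fun=> 0).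

Definition affine (f : (V -> R) -> R) :=
  forall v k s, f (upd v k s) = f v + (s - v k) * slope f k.

Lemma upd_upd v k s s' : upd (upd v k s) k s' = upd v k s'.
Proof. by apply: funext => u; rewrite /upd; case: eqP. Qed.

Lemma upd_id v k : upd v k (v k) = v.
Proof. by apply: funext => u; rewrite /upd; case: eqP => [->|]. Qed.

Lemma upd_eq v k s : upd v k s k = s.
Proof. by rewrite /upd eqxx. Qed.

Lemma affine_of_slopes f (c : V -> R) :
  (forall v k s, f (upd v k s) = f v + (s - v k) * c k) -> affine f.
Proof. by move=> H v k s; rewrite H /slope H /=; congr (_ + _ * _); ring. Qed.

Lemma affine_coord u : affine (fun v => v u).
Proof.
apply: (affine_of_slopes (c := fun k => (u == k)%:R)) => v k s; rewrite /upd.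
by case: eqP => [->|_]; rewrite ?mulr1 ?mulr0 ?addr0 //; ring.
Qed.

Lemma affine_cst a : affine (fun=> a).
Proof. by apply: (affine_of_slopes (c := fun=> 0)) => v k s; rewrite mulr0 addr0. Qed.

Lemma affine_comb a b f g :
  affine f -> affine g -> affine (fun v => a * f v + b * g v).
Proof.
move=> Hf Hg; apply: (affine_of_slopes (c := fun k => a * slope f k + b * slope g k)).
by move=> v k s; rewrite Hf Hg; ring.
Qed.

Lemma affine_add f g : affine f -> affine g -> affine (fun v => f v + g v).
Proof.
by move=> Hf Hg; have := affine_comb 1 1 Hf Hg; under eq_fun do rewrite !mul1r.
Qed.

Lemma affine_scale a f : affine f -> affine (fun v => a * f v).
Proof.
by move=> Hf; have := affine_comb a 0 Hf (affine_cst 0); under eq_fun do rewrite mul0r addr0.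
Qed.

Lemma affine_mulr a f : affine f -> affine (fun v => f v * a).
Proof. by move=> Hf; have := affine_scale a Hf; under eq_fun do rewrite mulrC. Qed.

Lemma affine_sub f g : affine f -> affine g -> affine (fun v => f v - g v).
Proof.
by move=> Hf Hg; have := affine_comb 1 (-1) Hf Hg; under eq_fun do rewrite mul1r mulN1r.
Qed.

Lemma affine_sum (I : finType) (f : I -> (V -> R) -> R) :
  (forall i, affine (f i)) -> affine (fun v => \sum_i f i v).
Proof.
move=> Hf; apply: (affine_of_slopes (c := fun k => \sum_i slope (f i) k)) => v k s.
rewrite mulr_sumr -big_split /=; apply: eq_bigr => i _; exact: Hf.
Qed.

Lemma slope_comb a b f g k :
  slope (fun v => a * f v + b * g v) k = a * slope f k + b * slope g k.
Proof. by rewrite /slope; ring. Qed.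

Lemma affine_upd0 f v k s : affine f -> f (upd v k s) = f (upd v k 0) + s * slope f k.
Proof. by move=> Hf; rewrite -{1}(upd_upd v k 0 s) Hf upd_eq subr0. Qed.

Lemma affine_agree f (l : seq V) v w : affine f -> (forall u, u \in l -> slope f u = 0) ->
  (forall u, u \notin l -> v u = w u) -> f v = f w.
Proof.
move=> Hf; elim: l v => [|k l IH] v Hc Hvw.
  by congr f; apply: funext => u; apply: Hvw.
have -> : f v = f (upd v k (w k)) by rewrite Hf Hc ?mem_head // mulr0 addr0.
apply: IH => [u ul|u ul]; first by apply: Hc; rewrite inE ul orbT.
rewrite /upd; case: eqP => [->//|/eqP uk]; apply: Hvw.
by rewrite inE negb_or uk.
Qed.

Lemma feasible1P (I : finType) (a b : I -> R) :
  (exists s, forall i, 0 <= a i + s * b i) <->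
  (forall i, b i = 0 -> 0 <= a i) /\
  (forall p q, 0 < b p -> b q < 0 -> 0 <= - b q * a p + b p * a q).
Proof.
split.
  case=> s Hs; split=> [i bi0|p q bp bq]; first by have := Hs i; rewrite bi0 mulr0 addr0.
  have -> : - b q * a p + b p * a q = - b q * (a p + s * b p) + b p * (a q + s * b q) by ring.
  by rewrite addr_ge0 // mulr_ge0 ?Hs // ?oppr_ge0 ltW.
case=> H0 Hpq.
case: (boolP [exists p, 0 < b p]) => [/existsP [p0 bp0]|/existsPn Hn].
  case: (@arg_maxP _ _ _ _ (fun i => 0 < b i) (fun i => - a i / b i) bp0) => p bp Hp.
  exists (- a p / b p) => i; case: (ltrgt0P (b i)) => [bi|bi|bi].
  - have := Hp i bi; rewrite /= ler_pdivrMr //.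
    by set s := - a p / b p; lra.
  - have := Hpq p i bp bi; set s := - a p / b p.
    have -> : - b i * a p + b p * a i = b p * (a i + s * b i).
      by rewrite /s; field; rewrite gt_eqF.
    by rewrite pmulr_rge0.
  - by rewrite bi mulr0 addr0; apply: H0.
exists (- \sum_i `|a i / b i|) => i; case: (ltrgt0P (b i)) => [bi|bi|bi].
- by move: (Hn i); rewrite bi.
- have Hle : a i / b i <= \sum_j `|a j / b j|.
    by rewrite (le_trans (ler_norm _)) // (bigD1 i) //= lerDl sumr_ge0.
  have := ler_wnM2r (ltW bi) Hle; rewrite divfK ?lt_eqF //.
  by set S := \sum_j _; lra.
- by rewrite bi mulr0 addr0; apply: H0.
Qed.

Lemma slope_scale a f k : slope (fun v => a * f v) k = a * slope f k.
Proof. by rewrite /slope; ring. Qed.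

Lemma natr_mul_ge0 (b : bool) (x : R) : (0 <= b%:R * x) = (b ==> (0 <= x)).
Proof. by case: b; rewrite ?mul1r ?mul0r ?lexx. Qed.

Lemma fm_eliminate (I : finType) (g : I -> (V -> R) -> R) k :
  (forall i, affine (g i)) ->
  exists (J : finType) (h : J -> (V -> R) -> R),
   [/\ forall j, affine (h j), forall j, slope (h j) k = 0,
       forall u, (forall i, slope (g i) u = 0) -> forall j, slope (h j) u = 0 &
       forall v, (exists s, forall i, 0 <= g i (upd v k s)) <-> forall j, 0 <= h j v].
Proof.
move=> Hg; pose c i := slope (g i) k.
pose h (x : I + I * I) : (V -> R) -> R :=
  match x with
  | inl i => fun v => (c i == 0)%:R * g i v
  | inr (p, q) => fun v => ((0 < c p) && (c q < 0))%:R * (- c q * g p v + c p * g q v)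
  end.
have Hh j : affine (h j).
  by case: j => [i|[p q]]; apply: affine_scale; rewrite ?Hg //; apply: affine_comb.
have slope_h j u : slope (h j) u =
    match j with
    | inl i => (c i == 0)%:R * slope (g i) u
    | inr (p, q) => ((0 < c p) && (c q < 0))%:R * (- c q * slope (g p) u + c p * slope (g q) u)
    end.
  by case: j => [i|[p q]]; rewrite slope_scale ?slope_comb.
have hk j : slope (h j) k = 0.
  rewrite slope_h; case: j => [i|[p q]].
    by rewrite -/(c i); case: eqP => [->|]; rewrite ?mulr0 ?mul0r.
  by rewrite -/(c p) -/(c q); ring.
exists _, h; split => //.
  by move=> u Hu j; rewrite slope_h; case: j => [i|[p q]]; rewrite !Hu; ring.
move=> v.
pose a i := g i (upd v k 0).
have hv j : h j v = h j (upd v k 0).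
  by rewrite -{1}(upd_id v k) affine_upd0 ?hk ?mulr0 ?addr0 //; apply: Hh.
have -> : (exists s, forall i, 0 <= g i (upd v k s)) <-> exists s, forall i, 0 <= a i + s * c i.
  by split; case=> s Hs; exists s => i; have := Hs i; rewrite affine_upd0.
rewrite feasible1P; split.
  case=> H0 Hpq [i|[p q]]; rewrite hv /= natr_mul_ge0.
    by apply/implyP => /eqP /H0.
  by apply/implyP => /andP [? ?]; apply: Hpq.
move=> H; split=> [i ci0|p q cp cq].
  by have := H (inl i); rewrite hv /= natr_mul_ge0 ci0 eqxx.
by have := H (inr (p, q)); rewrite hv /= natr_mul_ge0 cp cq.
Qed.

Lemma fm_eliminate_seq (l : seq V) (I : finType) (g : I -> (V -> R) -> R) :
  (forall i, affine (g i)) ->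
  exists (J : finType) (h : J -> (V -> R) -> R),
   [/\ forall j, affine (h j), forall u, u \in l -> forall j, slope (h j) u = 0,
       forall u, (forall i, slope (g i) u = 0) -> forall j, slope (h j) u = 0 &
       forall v, (exists v', (forall u, u \notin l -> v' u = v u) /\ forall i, 0 <= g i v')
                 <-> forall j, 0 <= h j v].
Proof.
elim: l I g => [|k l IH] I g Hg.
  exists I, g; split => // v; split => [[v' [Hv' H]]|H]; last by exists v.
  by have -> : v = v' by apply: funext => u; rewrite Hv'.
have [I1 [g1 [Hg1 Hk Hpres1 Heq1]]] := fm_eliminate k Hg.
have [J [h [Hh Hl Hpres2 Heq2]]] := IH I1 g1 Hg1.
exists J, h; split => //.
- by move=> u; rewrite inE => /orP [/eqP ->|ul] j; [apply: Hpres2 | apply: Hl].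
- by move=> u Hu; apply: Hpres2; apply: Hpres1.
move=> v; rewrite -Heq2; split.
  case=> v' [Hv' Hs]; exists (upd v' k (v k)); split.
    move=> u ul; rewrite /upd; case: eqP => [->//|/eqP uk]; apply: Hv'.
    by rewrite inE negb_or uk.
  by apply/Heq1; exists (v' k); rewrite upd_upd upd_id.
case=> v'' [Hv'' /Heq1 [s Hs]]; exists (upd v'' k s); split => // u.
by rewrite inE negb_or => /andP [uk ul]; rewrite /upd (negbTE uk) Hv''.
Qed.

End FourierMotzkin.

Section Polyhedral.
Variable R : realFieldType.

Definition polyhedral (S : R -> Prop) := exists (I : finType) (a b : I -> R),
  forall r, S r <-> forall i, 0 <= a i + r * b i.

Lemma polyhedral_proj (V : finType) (I : finType) (g : I -> (V -> R) -> R) (p : V) :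
  (forall i, affine (g i)) -> polyhedral (fun r => exists v, v p = r /\ forall i, 0 <= g i v).
Proof.
move=> Hg.
have [J [h [Hh Hl _ Heq]]] := fm_eliminate_seq [seq u <- enum V | u != p] Hg.
exists J, (fun j => h j (fun=> 0)), (fun j => slope (h j) p) => r.
have hE j v : h j v = h j (fun=> 0) + v p * slope (h j) p.
  rewrite (affine_agree (v := v) (w := upd (fun=> 0) p (v p)) (Hh j) (fun u hu => Hl u hu j)).
    by rewrite Hh subr0.
  by move=> u; rewrite mem_filter mem_enum andbT negbK => /eqP ->; rewrite upd_eq.
split=> [[v [vp Hs]] j|H].
  by rewrite -vp -hE; move: j; apply/(Heq v); exists v.
have /Heq [v' [Hv' Hs]] : forall j, 0 <= h j (upd (fun=> 0) p r) by move=> j; rewrite hE upd_eq.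
by exists v'; rewrite Hv' ?upd_eq // mem_filter eqxx.
Qed.

Lemma polyhedral_proj_system (V Ie Ii : finType) (ge : Ie -> (V -> R) -> R)
    (gi : Ii -> (V -> R) -> R) (p q : V) (c : R) :
  (forall i, affine (ge i)) -> (forall i, affine (gi i)) ->
  polyhedral (fun r => exists v,
    [/\ v p = r, v q = c, forall i, ge i v = 0 & forall i, 0 <= gi i v]).
Proof.
move=> He Hi.
pose ge' (e : option Ie) : (V -> R) -> R :=
  if e is Some i then ge i else fun v => v q - c.
pose g (i : option Ie * bool + Ii) : (V -> R) -> R :=
  match i with inl (e, b) => fun v => (-1) ^+ b * ge' e v | inr i => gi i end.
have Hg i : affine (g i).
  case: i => [[[e|] b]|i] //=; apply: affine_scale => //.
  by apply: affine_sub; [apply: affine_coord | apply: affine_cst].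
have geP v : (forall e, ge' e v = 0) <-> forall e (b : bool), 0 <= (-1) ^+ b * ge' e v.
  split=> [H e b|H e]; first by rewrite H mulr0.
  have := H e true; have := H e false; rewrite expr0 expr1 mul1r mulN1r oppr_ge0 => h1 h2.
  by apply/eqP; rewrite eq_le h1 h2.
have [J [a [b H]]] := polyhedral_proj p Hg.
exists J, a, b => r; rewrite -H; split.
  case=> v [vp vq hge hgi]; have /geP H0 : forall e, ge' e v = 0.
    by case=> [i|] /=; rewrite ?hge ?vq ?subrr.
  by exists v; split=> // -[[e b']|i] //=; apply: H0.
case=> v [vp hs]; exists v.
have /geP hge : forall e (b' : bool), 0 <= (-1) ^+ b' * ge' e v.
  by move=> e b'; exact: (hs (inl (e, b'))).
split=> // [|i|i]; last exact: (hs (inr i)); last exact: (hge (Some i)).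
by apply/eqP; rewrite -subr_eq0; apply/eqP; apply: (hge None).
Qed.

Lemma polyhedral_min S : polyhedral S -> (exists r, S r) -> (exists L, forall r, S r -> L <= r) ->
  exists m, S m /\ forall r, S r -> m <= r.
Proof.
case=> I [a [b HS]] [x0 /HS H0] [L HL].
case: (boolP [exists i, 0 < b i]) => [/existsP [i0 bi0]|/existsPn Hn].
  case: (@arg_maxP _ _ _ _ (fun i => 0 < b i) (fun i => - a i / b i) bi0) => p bp Hp.
  exists (- a p / b p); split; last first.
    by move=> r /HS /(_ p) H; rewrite ler_pdivrMr //; lra.
  apply/HS => i; case: (ltrgt0P (b i)) => [bi|bi|bi].
  - by have := Hp i bi; rewrite /= ler_pdivrMr //; set x := - a p / b p; lra.
  - have Hm : - a p / b p <= x0 by rewrite ler_pdivrMr //; have := H0 p; lra.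
    have := H0 i; have : x0 * b i <= - a p / b p * b i by rewrite ler_wnM2r // ltW.
    lra.
  - by rewrite bi mulr0 addr0; have := H0 i; rewrite bi mulr0 addr0.
pose r := Num.min x0 (L - 1).
have /HL : S r.
  apply/HS => i; have bi : b i <= 0 by rewrite leNgt Hn.
  have : x0 * b i <= r * b i by rewrite ler_wnM2r // ge_min lexx.
  by have := H0 i; lra.
by rewrite le_min => /andP [_]; lra.
Qed.

Lemma polyhedral_closed0 S : polyhedral S ->
  (forall e, 0 < e -> exists x, [/\ 0 <= x, x < e & S x]) -> S 0.
Proof.
case=> I [a [b HS]] H; apply/HS => i; rewrite mul0r addr0 leNgt; apply/negP => ai.
have e0 : 0 < - a i / (`|b i| + 1) by rewrite divr_gt0 ?oppr_gt0 // ltr_wpDl.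
have [x [x0 xe /HS /(_ i) Hx]] := H _ e0.
have : x * (`|b i| + 1) < - a i by rewrite -ltr_pdivlMr // ltr_wpDl.
have : x * b i <= x * `|b i| by rewrite ler_wpM2l // ler_norm.
by rewrite mulrDr mulr1; move: Hx; lra.
Qed.

End Polyhedral.

Lemma ler_sum_mem (R : numDomainType) (I : eqType) (r : seq I) (G : I -> R) i :
  i \in r -> uniq r -> (forall j, j \in r -> 0 <= G j) -> G i <= \sum_(j <- r) G j.
Proof.
move=> ir ur G0; rewrite (bigD1_seq i) //= lerDl big_seq_cond sumr_ge0 // => j /andP [jr _].
exact: G0.
Qed.

Section SolvencyCone.
Variables (R : realType) (d : nat) (Omega : finType).
Variable pi : nat -> Omega -> 'I_d -> 'I_d -> R.
Local Notation inK := (@inK R d Omega pi).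

Lemma inK0 t w : inK t w 0.
Proof.
exists (fun=> 0), (fun _ _ => 0); split => //; split => //.
by rewrite !big1 ?addr0 // => j _; rewrite ?big1 ?scale0r // => k _; rewrite scale0r.
Qed.

Lemma inKD t w u v : inK t w u -> inK t w v -> inK t w (u + v).
Proof.
move=> [a1 [b1 [ha1 [hb1 ->]]]] [a2 [b2 [ha2 [hb2 ->]]]].
exists (fun j => a1 j + a2 j), (fun j k => b1 j k + b2 j k).
split=> [j|]; first exact: addr_ge0.
split=> [j k|]; first exact: addr_ge0.
rewrite addrACA; congr (_ + _); rewrite -big_split; apply: eq_bigr => j _ /=.
  by rewrite scalerDl.
by rewrite -big_split; apply: eq_bigr => k _; rewrite scalerDl.
Qed.

Lemma inKZ t w c u : 0 <= c -> inK t w u -> inK t w (c *: u).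
Proof.
move=> c0 [a [b [ha [hb ->]]]].
exists (fun j => c * a j), (fun j k => c * b j k).
split=> [j|]; first exact: mulr_ge0.
split=> [j k|]; first exact: mulr_ge0.
rewrite scalerDr !scaler_sumr; congr (_ + _); apply: eq_bigr => j _.
  by rewrite scalerA.
by rewrite scaler_sumr; apply: eq_bigr => k _; rewrite scalerA.
Qed.

Lemma inK_sum (I : finType) (l : I -> R) (u : I -> vec R d) t w :
  (forall i, 0 <= l i) -> (forall i, inK t w (u i)) -> inK t w (\sum_i l i *: u i).
Proof.
move=> hl hu; apply: (big_ind (inK t w)); [exact: inK0 | exact: inKD |].
by move=> i _; apply: inKZ.
Qed.

End SolvencyCone.

Section Nodes.
Variables (R : realType) (Omega : finType) (T : nat).
Variables (F : nat -> {set {set Omega}}) (P : Omega -> R).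
Hypothesis hF : filtered_space T F P.

Lemma F_partition t : (t <= T)%N -> finset.partition (F t) [set: Omega]%SET.
Proof. by case: hF => _ [_ [H _]] /H. Qed.

Lemma F_parent t nu : (t < T)%N -> nu \in F t.+1 -> exists2 mu, mu \in F t & nu \subset mu.
Proof. by case: hF => _ [_ [_ [H _]]] /H; apply. Qed.

Lemma atom_of t w : (t <= T)%N -> exists2 l, l \in F t & w \in l.
Proof.
move=> /F_partition /and3P [/eqP hc _ _].
by apply/finset.bigcupP; rewrite -/(finset.cover _) hc inE.
Qed.

Lemma atom_uniq t l1 l2 w : (t <= T)%N -> l1 \in F t -> l2 \in F t ->
  w \in l1 -> w \in l2 -> l1 = l2.
Proof.
move=> /F_partition /and3P [_ /finset.trivIsetP htr _] h1 h2 w1 w2.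
apply/eqP; apply/negPn/negP => /(htr _ _ h1 h2) hd.
by move: (disjointFr hd w1); rewrite w2.
Qed.

Lemma atom_n0 t l : (t <= T)%N -> l \in F t -> exists w, w \in l.
Proof.
move=> /F_partition /and3P [_ _ h0] hl; apply/set0Pn.
by apply: contraNneq h0 => <-.
Qed.

Lemma atom_sub t s l mu w : (t <= s <= T)%N -> l \in F s -> mu \in F t ->
  w \in l -> w \in mu -> l \subset mu.
Proof.
elim: s l w => [|s IH] l w /andP [ts sT] hl hmu wl wmu.
  have t0 : t = 0%N by lia.
  by subst t; rewrite (atom_uniq (leq0n T) hl hmu wl wmu).
have [e|ne] := eqVneq t s.+1; first by subst t; rewrite (atom_uniq sT hl hmu wl wmu).
have [l' hl' sub] := F_parent sT hl.
have wl' : w \in l' := fintype.subsetP sub _ wl.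
apply: fintype.subset_trans sub _; apply: (IH l' w) => //.
by apply/andP; split; lia.
Qed.

Definition meas_on {A : Type} s (mu : {set Omega}) (f : Omega -> A) :=
  forall l, l \in F s -> l \subset mu -> forall w1 w2, w1 \in l -> w2 \in l -> f w1 = f w2.

Lemma meas_on_setT {A : Type} s (f : Omega -> A) : meas F s f <-> meas_on s [set: Omega]%SET f.
Proof.
by split=> H l hl; [move=> _; apply: H | apply: H => //; apply: fintype.subset_predT].
Qed.

Lemma meas_map {A B : Type} s (f : Omega -> A) (h : A -> B) :
  meas F s f -> meas F s (fun w => h (f w)).
Proof. by move=> H l hl w1 w2 h1 h2; rewrite (H l hl w1 w2 h1 h2). Qed.

Lemma meas_meas_on {A : Type} s (mu : {set Omega}) (f : Omega -> A) : meas F s f -> meas_on s mu f.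
Proof. by move=> H l hl _; apply: H. Qed.

Lemma meas_on_sub {A : Type} s (mu nu : {set Omega}) (f : Omega -> A) :
  meas_on s mu f -> nu \subset mu -> meas_on s nu f.
Proof. by move=> H sub l hl lnu; apply: H => //; apply: fintype.subset_trans sub. Qed.

Lemma meas_on_atom {A : Type} t (mu : {set Omega}) (f : Omega -> A) w1 w2 : mu \in F t ->
  meas_on t mu f -> w1 \in mu -> w2 \in mu -> f w1 = f w2.
Proof. by move=> hmu H; apply: H => //; apply: fintype.subxx. Qed.

Lemma meas_on_fam {A B I : Type} s (mu : {set Omega}) (f : I -> Omega -> A) (h : (I -> A) -> B) :
  (forall i, meas_on s mu (f i)) -> meas_on s mu (fun w => h (fun i => f i w)).
Proof.
move=> H l hl sub w1 w2 h1 h2; congr h.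
by apply: funext => i; apply: (H i l hl sub).
Qed.

Lemma meas_on_map {A B : Type} s (mu : {set Omega}) (f : Omega -> A) (h : A -> B) :
  meas_on s mu f -> meas_on s mu (fun w => h (f w)).
Proof. by move=> Hf l hl sub w1 w2 h1 h2; rewrite (Hf l hl sub w1 w2). Qed.

Lemma meas_on_map2 {A B C : Type} s (mu : {set Omega}) (f : Omega -> A) (g : Omega -> B)
    (h : A -> B -> C) :
  meas_on s mu f -> meas_on s mu g -> meas_on s mu (fun w => h (f w) (g w)).
Proof.
by move=> Hf Hg l hl sub w1 w2 h1 h2; rewrite (Hf l hl sub w1 w2) // (Hg l hl sub w1 w2).
Qed.

Lemma meas_on_extend {A : Type} (z : A) t s (mu : {set Omega}) (f : Omega -> A) : (t <= s <= T)%N ->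
  mu \in F t -> meas_on s mu f -> meas F s (fun w => if w \in mu then f w else z).
Proof.
move=> ts hmu H l hl w1 w2 h1 h2.
have [m1|m1] := boolP (w1 \in mu).
  have sub := atom_sub ts hl hmu h1 m1.
  by rewrite (fintype.subsetP sub _ h2); exact: (H l hl sub w1 w2 h1 h2).
have [m2|//] := boolP (w2 \in mu).
by move: m1; rewrite (fintype.subsetP (atom_sub ts hl hmu h2 m2) _ h1).
Qed.

Definition child t w : {set Omega} := odflt finset.set0 [pick nu in F t.+1 | w \in nu].

Lemma child_atom t w : (t < T)%N -> child t w \in F t.+1 /\ w \in child t w.
Proof.
move=> tT; rewrite /child; case: pickP => [nu /andP [h1 h2] //|H].
have [l hl wl] := atom_of w tT.
by move: (H l); rewrite hl wl.
Qed.

Lemma child_sub t s l w1 w2 : (t < s <= T)%N -> l \in F s -> w1 \in l -> w2 \in l ->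
  child t w2 = child t w1 /\ l \subset child t w1.
Proof.
move=> hs hl h1 h2; have tT : (t < T)%N by move: hs; lia.
have [c1 w1c] := child_atom w1 tT; have [c2 w2c] := child_atom w2 tT.
have sub : l \subset child t w1 by apply: (atom_sub _ hl c1 h1 w1c).
split=> //; apply: (atom_uniq tT c2 c1 w2c); exact: fintype.subsetP sub _ h2.
Qed.

End Nodes.

Section Hedging.
Variables (R : realType) (d : nat) (Omega : finType) (T : nat).
Variables (F : nat -> {set {set Omega}}) (P : Omega -> R).
Variable pi : nat -> Omega -> 'I_d -> 'I_d -> R.
Variable xi : nat -> Omega -> vec R d.
Hypothesis hF : filtered_space T F P.
Hypothesis hxi : adapted T F xi.

Local Notation vec := (vec R d).
Local Notation inK := (@inK R d Omega pi).
Local Notation meas_on := (meas_on F).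

Definition Qloc t (mu : {set Omega}) (q : vec) := exists y : nat -> Omega -> vec,
  [/\ forall s, (t < s <= T.+1)%N -> meas_on s.-1 mu (y s),
      forall w, w \in mu -> y T.+1 w = 0,
      forall w, w \in mu -> inK t w (q - y t.+1 w) &
      forall s, (t < s <= T)%N -> forall w, w \in mu -> inK s w (y s w - y s.+1 w)].

Lemma QnodeP t (mu : {set Omega}) q : (t <= T)%N -> mu \in F t ->
  Qnode T F pi t mu q <-> Qloc t mu q.
Proof.
move=> tT hmu; split.
  case=> z [[_ [y [my [y0 [yt ys]]]]] zq]; exists y; split.
  - by move=> s hs; apply: meas_meas_on; apply: my.
  - by move=> w _; apply: y0.
  - by move=> w wm; rewrite -(zq w wm); apply: yt.
  - by move=> s hs w _; apply: ys.
case=> y [my y0 yt ys].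
have tt : (t <= t <= T)%N by rewrite leqnn.
exists (fun w => if w \in mu then q else 0); split; last by move=> w ->.
split; first by apply: (meas_on_extend hF 0 tt hmu (f := fun=> q)).
exists (fun s w => if w \in mu then y s w else 0); split.
  move=> s /andP [ts sT]; apply: (meas_on_extend hF 0 _ hmu); last by apply: my; apply/andP.
  by apply/andP; split; lia.
split; first by move=> w; case: ifP => // /y0.
split; first by move=> w; case: ifP => wm; [exact: yt | rewrite subrr; apply: inK0].
by move=> s hs w; case: ifP => wm; [exact: ys | rewrite subrr; apply: inK0].
Qed.

Lemma Qnode_K t (mu : {set Omega}) k : (t <= T)%N -> mu \in F t ->
  (forall w, w \in mu -> inK t w k) -> Qnode T F pi t mu k.
Proof.
move=> tT hmu hk; apply/QnodeP => //; exists (fun _ _ => 0); split => //.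
- by move=> w wm; rewrite subr0; apply: hk.
- by move=> s _ w _; rewrite subrr; apply: inK0.
Qed.

Record hedges t (mu : {set Omega}) (x : vec) (y : nat -> Omega -> vec)
    (chi : nat -> Omega -> R) : Prop := Hedges {
  hedges_ymeas : forall s, (t < s <= T.+1)%N -> meas_on s.-1 mu (y s);
  hedges_chimeas : forall s, (t <= s <= T)%N -> meas_on s mu (chi s);
  hedges_init : forall w, w \in mu -> y t w = x;
  hedges_final : forall w, w \in mu -> y T.+1 w = 0;
  hedges_chi_ge0 : forall s w, (t <= s <= T)%N -> w \in mu -> 0 <= chi s w;
  hedges_chi_sum : forall w, w \in mu -> \sum_(t <= s < T.+1) chi s w = 1;
  hedges_solvent : forall s w, (t <= s <= T)%N -> w \in mu ->
    inK s w (y s w + chi s w *: xi s w - y s.+1 w) }.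

Lemma hedges_chi_le1 t (mu : {set Omega}) x y chi s w :
  hedges t mu x y chi -> (t <= s <= T)%N -> w \in mu -> chi s w <= 1.
Proof.
move=> [_ _ _ _ c0 cs _] hs wm; rewrite -(cs w wm).
apply: (ler_sum_mem (G := chi^~ w)); [by rewrite mem_index_iota ltnS | exact: iota_uniq |].
by move=> i; rewrite mem_index_iota => hi; apply: c0 => //; move: hi; lia.
Qed.

Definition hedgeable t (mu : {set Omega}) x := exists y chi, hedges t mu x y chi.

Lemma Ubd_hedgeable t (mu : {set Omega}) x : (t <= T)%N -> mu \in F t ->
  Ubd T F pi xi t mu x -> hedgeable t mu x.
Proof.
move=> tT hmu [q [/(QnodeP q tT hmu) [yq [my y0 yt ys]] hx]].
exists (fun s w => if s == t then x else yq s w), (fun s _ => (s == t)%:R); split.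
- by move=> s /andP [ts sT]; rewrite (gtn_eqF ts); apply: my; rewrite ts sT.
- by move=> s _ ? ? ? ? ? _ _.
- by move=> w _ /=; rewrite eqxx.
- by move=> w wm /=; rewrite gtn_eqF ?ltnS //; apply: y0.
- by move=> s w _ _; rewrite ler0n.
- move=> w wm; rewrite big_ltn ?ltnS // eqxx big_nat_cond big1 ?addr0 //.
  by move=> s /andP [/andP [hs _] _]; rewrite gtn_eqF.
move=> s w /andP [ts sT] wm; have -> : (s.+1 == t) = false by rewrite gtn_eqF // ltnS.
case: eqP => [->|/eqP nst].
  by rewrite scale1r (hx w wm) [- xi t w + q]addrC subrK; apply: yt.
by rewrite scale0r addr0; apply: ys => //; apply/andP; split; lia.
Qed.

Lemma hedges_Ubd t (mu : {set Omega}) x y chi : (t <= T)%N -> mu \in F t ->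
  hedges t mu x y chi -> (forall w, w \in mu -> chi t w = 1) -> Ubd T F pi xi t mu x.
Proof.
move=> tT hmu [my mc yt y0 c0 cs hK] c1.
have [w0 w0m] := atom_n0 hF tT hmu.
have xic w : w \in mu -> xi t w = xi t w0 by move=> wm; apply: (hxi tT hmu).
have czero s w : (t < s <= T)%N -> w \in mu -> chi s w = 0.
  move=> hs wm; have c0s : 0 <= chi s w by apply: c0 => //; move: hs; lia.
  apply/eqP; rewrite eq_le c0s andbT.
  have := cs w wm; rewrite big_ltn ?ltnS // c1 // => /(canRL (addKr 1)); rewrite addNr => <-.
  apply: ler_sum_mem; [by rewrite mem_index_iota; move: hs; lia | exact: iota_uniq |].
  by move=> i; rewrite mem_index_iota => hi; apply: c0 => //; move: hi; lia.
exists (x + xi t w0); split; last by move=> w wm; rewrite xic // addrCA addNr addr0.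
apply/QnodeP => //; exists y; split => //.
- move=> w wm; have := hK t w _ wm; rewrite c1 // scale1r yt // xic //.
  by apply; rewrite leqnn tT.
- move=> s hs w wm; have := hK s w _ wm; rewrite czero // scale0r addr0.
  by apply; apply/andP; split; lia.
Qed.

Lemma hedgeable_conv t (mu : {set Omega}) n (p : 'I_n -> vec) (l : 'I_n -> R) :
  (forall i, hedgeable t mu (p i)) -> (forall i, 0 <= l i) -> \sum_i l i = 1 ->
  hedgeable t mu (\sum_i l i *: p i).
Proof.
move=> hp hl hs.
have /choice [Y HY] : forall i, exists yc : (nat -> Omega -> vec) * (nat -> Omega -> R),
    hedges t mu (p i) yc.1 yc.2.
  by move=> i; case: (hp i) => y [chi H]; exists (y, chi).
exists (fun s w => \sum_i l i *: (Y i).1 s w), (fun s w => \sum_i l i * (Y i).2 s w); split.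
- move=> s hs'; apply: (meas_on_fam (f := fun i w => (Y i).1 s w) (fun g => \sum_i l i *: g i)).
  by move=> i; apply: (hedges_ymeas (HY i)).
- move=> s hs'; apply: (meas_on_fam (f := fun i w => (Y i).2 s w) (fun g => \sum_i l i * g i)).
  by move=> i; apply: (hedges_chimeas (HY i)).
- by move=> w wm; apply: eq_bigr => i _; rewrite (hedges_init (HY i)).
- by move=> w wm; rewrite big1 // => i _; rewrite (hedges_final (HY i)) // scaler0.
- move=> s w hs' wm; apply: sumr_ge0 => i _.
  by rewrite mulr_ge0 // (hedges_chi_ge0 (HY i)).
- move=> w wm; rewrite exchange_big /= -[RHS]hs; apply: eq_bigr => i _.
  by rewrite -mulr_sumr (hedges_chi_sum (HY i)) // mulr1.
move=> s w hs' wm.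
have -> : \sum_i l i *: (Y i).1 s w + (\sum_i l i * (Y i).2 s w) *: xi s w
     - \sum_i l i *: (Y i).1 s.+1 w
   = \sum_i l i *: ((Y i).1 s w + (Y i).2 s w *: xi s w - (Y i).1 s.+1 w).
  rewrite scaler_suml -big_split -sumrB /=; apply: eq_bigr => i _.
  by rewrite scalerBr scalerDr scalerA.
by apply: inK_sum => // i; apply: (hedges_solvent (HY i)).
Qed.

Lemma hedgeable_prepend t (mu : {set Omega}) v q : (t < T)%N -> mu \in F t ->
  hedgeable t.+1 mu v -> Qnode T F pi t mu q -> hedgeable t mu (v + q).
Proof.
move=> tT hmu [y [chi [my mc yt y0 c0 cs hK]]] /(QnodeP q (ltnW tT) hmu) [yq [myq yq0 yqt yqs]].
exists (fun s w => if s == t then v + q else y s w + yq s w),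
       (fun s w => if s == t then 0 else chi s w); split.
- move=> s /andP [ts sT]; rewrite gtn_eqF //; apply: meas_on_map2; last by apply: myq; rewrite ts.
  have [<-|ne] := eqVneq t.+1 s; last by apply: my; apply/andP; split; lia.
  by move=> l hl sub w1 w2 h1 h2; rewrite !yt //; apply: (fintype.subsetP sub).
- move=> s /andP [ts sT]; case: eqP => // /eqP ne.
  by apply: mc; apply/andP; split; lia.
- by move=> w wm /=; rewrite eqxx.
- by move=> w wm /=; rewrite (gtn_eqF (ltnW _)) ?ltnS // y0 // yq0 // addr0.
- move=> s w /andP [ts sT] wm; case: eqP => // /eqP ne.
  by apply: c0 => //; apply/andP; split; lia.
- move=> w wm; rewrite big_ltn ?ltnS ?(ltnW tT) // eqxx add0r -(cs w wm).
  by apply: eq_big_nat => s /andP [h1 _]; rewrite gtn_eqF.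
move=> s w /andP [ts sT] wm; rewrite (gtn_eqF (_ : t < s.+1)%N) ?ltnS //.
case: eqP => [->|/eqP ne].
  by rewrite scale0r addr0 yt // opprD addrACA subrr add0r; exact: yqt.
have -> : y s w + yq s w + chi s w *: xi s w - (y s.+1 w + yq s.+1 w)
   = (y s w + chi s w *: xi s w - y s.+1 w) + (yq s w - yq s.+1 w).
  by rewrite [RHS]addrACA -opprD; congr (_ - _); rewrite addrAC.
by apply: inKD; [apply: hK | apply: yqs] => //; apply/andP; split; lia.
Qed.

Lemma hedgeable_glue t (mu : {set Omega}) v : (t < T)%N -> mu \in F t ->
  (forall nu, nu \in F t.+1 -> nu \subset mu -> hedgeable t.+1 nu v) -> hedgeable t.+1 mu v.
Proof.
move=> tT hmu hW.
have /choice [Y HY] : forall nu : {set Omega},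
    exists yc : (nat -> Omega -> vec) * (nat -> Omega -> R),
    nu \in F t.+1 -> nu \subset mu -> hedges t.+1 nu v yc.1 yc.2.
  move=> nu; have [/andP [h1 h2]|h] := boolP ((nu \in F t.+1) && (nu \subset mu)).
    by case: (hW nu h1 h2) => y [chi H]; exists (y, chi).
  by exists ((fun _ _ => 0), (fun _ _ => 0)) => h1 h2; rewrite h1 h2 in h.
pose N w := child F t w.
have HN w : w \in mu -> w \in N w /\ hedges t.+1 (N w) v (Y (N w)).1 (Y (N w)).2.
  move=> wm; have [h1 h2] := child_atom hF w tT; split => //; apply: HY => //.
  by apply: (atom_sub hF _ h1 hmu h2 wm); apply/andP; split; lia.
exists (fun s w => (Y (N w)).1 s w), (fun s w => (Y (N w)).2 s w); split.
- move=> s hs l hl lsub w1 w2 h1 h2.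
  have hs' : (t < s.-1 <= T)%N by move: hs; lia.
  have [e sub] := child_sub hF hs' hl h1 h2.
  have [_ H] := HN w1 (fintype.subsetP lsub _ h1).
  by have := hedges_ymeas H hs hl sub h1 h2; rewrite /N e.
- move=> s hs l hl lsub w1 w2 h1 h2.
  have hs' : (t < s <= T)%N by move: hs; lia.
  have [e sub] := child_sub hF hs' hl h1 h2.
  have [_ H] := HN w1 (fintype.subsetP lsub _ h1).
  by have := hedges_chimeas H hs hl sub h1 h2; rewrite /N e.
- by move=> w /HN [wN H]; apply: (hedges_init H).
- by move=> w /HN [wN H]; apply: (hedges_final H).
- by move=> s w hs /HN [wN H]; apply: (hedges_chi_ge0 H).
- by move=> w /HN [wN H]; apply: (hedges_chi_sum H).
- by move=> s w hs /HN [wN H]; apply: (hedges_solvent H).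
Qed.

Lemma hedges_continuation t (mu : {set Omega}) x y chi w0 : (t < T)%N -> mu \in F t ->
  hedges t mu x y chi -> w0 \in mu -> chi t w0 < 1 ->
  forall nu, nu \in F t.+1 -> nu \subset mu ->
  hedgeable t.+1 nu ((1 - chi t w0)^-1 *: y t.+1 w0).
Proof.
move=> tT hmu [my mc yt y0 c0 cs hK] w0m c1 nu hnu sub.
have subP := fintype.subsetP sub.
set c := chi t w0; have cpos : 0 < 1 - c by rewrite subr_gt0.
have cc w : w \in mu -> chi t w = c.
  by move=> wm; apply: (meas_on_atom hmu (mc t _)) => //; rewrite leqnn ltnW.
have yc w : w \in mu -> y t.+1 w = y t.+1 w0.
  by move=> wm; apply: (meas_on_atom hmu (my t.+1 _)) => //; rewrite ltnS leqnn ltnW.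
exists (fun s w => (1 - c)^-1 *: y s w), (fun s w => (1 - c)^-1 * chi s w); split.
- move=> s hs; apply: meas_on_map; apply: (meas_on_sub _ sub); apply: my; move: hs; lia.
- move=> s hs; apply: meas_on_map; apply: (meas_on_sub _ sub); apply: mc; move: hs; lia.
- by move=> w /subP wm; rewrite yc.
- by move=> w /subP wm; rewrite y0 ?scaler0.
- move=> s w hs /subP wm; apply: mulr_ge0; first by rewrite invr_ge0 ltW.
  by apply: c0 => //; move: hs; lia.
- move=> w /subP wm; rewrite -mulr_sumr.
  have := cs w wm; rewrite big_ltn ?ltnS ?(ltnW tT) // cc // => /(canRL (addKr c)) ->.
  by rewrite [- c + 1]addrC mulVf ?gt_eqF.
move=> s w hs /subP wm.
rewrite -scalerA -scalerDr -scalerBr; apply: inKZ; first by rewrite invr_ge0 ltW.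
by apply: hK => //; move: hs; lia.
Qed.

Lemma conv_mem (A : set vec) a : A a -> conv A a.
Proof.
move=> Ha; exists 1%N, (fun=> a), (fun=> 1); split => //; split; first by move=> _; rewrite ler01.
by rewrite big_ord1; split => //; rewrite big_ord1 scale1r.
Qed.

Lemma conv2 (A : set vec) a b c : A a -> A b -> 0 <= c <= 1 ->
  conv A (c *: a + (1 - c) *: b).
Proof.
move=> Ha Hb /andP [c0 c1].
exists 2%N, (fun i : 'I_2 => if nat_of_ord i == 0%N then a else b),
  (fun i : 'I_2 => if nat_of_ord i == 0%N then c else 1 - c); split.
  by move=> i; case: ifP.
split; first by move=> i; case: ifP => _ //; rewrite subr_ge0.
by rewrite !big_ord_recl !big_ord0 /= !addr0; split => //; rewrite addrC subrK.
Qed.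

Definition Zstep t (mu : {set Omega}) (Z : {set Omega} -> set vec) : set vec :=
  conv (Ubd T F pi xi t mu `|`
        setadd [set v | forall nu, nu \in F t.+1 -> nu \subset mu -> Z nu v] (Qnode T F pi t mu)).

Lemma ZrecS n t (mu : {set Omega}) : Zrec T F pi xi n.+1 t mu = Zstep t mu (Zrec T F pi xi n t.+1).
Proof. by []. Qed.

Lemma Zstep_hedgeable t (mu : {set Omega}) (Z : {set Omega} -> set vec) x :
  (t < T)%N -> mu \in F t -> (forall nu v, nu \in F t.+1 -> Z nu v -> hedgeable t.+1 nu v) ->
  Zstep t mu Z x -> hedgeable t mu x.
Proof.
move=> tT hmu hZ [m [p [l [hp [hl [hs ->]]]]]]; apply: hedgeable_conv => // i.
case: (hp i) => [|[a [b [hWa [hQb ->]]]]]; first exact: Ubd_hedgeable (ltnW tT) hmu.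
apply: hedgeable_prepend => //; apply: hedgeable_glue => // nu h1 h2.
exact/hZ/hWa.
Qed.

Lemma hedgeable_Zstep t (mu : {set Omega}) (Z : {set Omega} -> set vec) x :
  (t < T)%N -> mu \in F t -> (forall nu v, nu \in F t.+1 -> hedgeable t.+1 nu v -> Z nu v) ->
  hedgeable t mu x -> Zstep t mu Z x.
Proof.
move=> tT hmu hZ [y [chi H]]; have [my mc yt _ c0 cs hK] := H.
have [w0 w0m] := atom_n0 hF (ltnW tT) hmu.
set c := chi t w0.
have tt : (t <= t <= T)%N by rewrite leqnn ltnW.
have cc w : w \in mu -> chi t w = c by move=> wm; apply: (meas_on_atom hmu (mc t tt)).
have c1 : c <= 1 := hedges_chi_le1 H tt w0m.
have cge0 : 0 <= c by apply: c0.
have [ec|nc] := eqVneq c 1.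
  by apply: conv_mem; left; apply: (hedges_Ubd (ltnW tT) hmu H) => w wm; rewrite cc.
have clt : c < 1 by rewrite lt_neqAle nc.
set v := (1 - c)^-1 *: y t.+1 w0.
have hW nu : nu \in F t.+1 -> nu \subset mu -> Z nu v.
  by move=> h1 h2; apply/hZ => //; apply: (hedges_continuation tT hmu H w0m clt).
have xic w : w \in mu -> xi t w = xi t w0 by move=> wm; apply: (hxi (ltnW tT) hmu).
have yc w : w \in mu -> y t.+1 w = y t.+1 w0.
  by move=> wm; apply: (meas_on_atom hmu (my t.+1 _)) => //; rewrite ltnS leqnn.
set k := x + c *: xi t w0 - y t.+1 w0.
have hQ k' : (forall w, w \in mu -> inK t w k') -> Qnode T F pi t mu k'.
  exact: Qnode_K (ltnW tT) hmu.
have hk w : w \in mu -> inK t w k.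
  by move=> wm; have := hK t w tt wm; rewrite (yt w wm) cc // xic // yc.
have [c0'|cn0] := eqVneq c 0.
  apply: conv_mem; right; exists v, k; split => //; split; first exact: hQ.
  by rewrite /v /k c0' subr0 invr1 scale1r scale0r addr0 addrC subrK.
(* [x] mixes exercising now (weight [c]) with continuing (weight [1 - c]). *)
have -> : x = c *: (- xi t w0 + c^-1 *: k) + (1 - c) *: (v + 0).
  rewrite addr0 /v scalerA mulfV ?subr_eq0 1?eq_sym // scale1r.
  rewrite scalerDr scalerA mulfV // scale1r /k.
  by rewrite scalerN -addrA subrK addrCA addNr addr0.
apply: conv2; last by rewrite cge0 c1.
  left; exists (c^-1 *: k); split; last by move=> w wm; rewrite xic.
  by apply: hQ => w wm; apply: inKZ; [rewrite invr_ge0 | apply: hk].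
by right; exists v, 0; split => //; split => //; apply: hQ => w _; apply: inK0.
Qed.

Lemma Zrec_hedgeable n t (mu : {set Omega}) x : (t + n)%N = T -> mu \in F t ->
  Zrec T F pi xi n t mu x <-> hedgeable t mu x.
Proof.
elim: n t mu x => [|n IH] t mu x htn hmu.
  rewrite addn0 in htn; subst t; split; first exact: Ubd_hedgeable.
  case=> y [chi H]; apply: (hedges_Ubd _ hmu H) => // w wm.
  by have := hedges_chi_sum H wm; rewrite big_nat1.
have tT : (t < T)%N by lia.
have hIH nu v : nu \in F t.+1 -> Zrec T F pi xi n t.+1 nu v <-> hedgeable t.+1 nu v.
  by move=> hnu; apply: IH => //; lia.
rewrite ZrecS; split; first by apply: Zstep_hedgeable => // nu v hnu /hIH; apply.
by apply: hedgeable_Zstep => // nu v hnu /hIH; apply.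
Qed.

Lemma hedgeable_root x : hedgeable 0 [set: Omega]%SET x <-> init_bg T F pi xi x.
Proof.
have inT w : w \in [set: Omega]%SET by rewrite inE.
split.
  case=> y [chi H]; have [my mc yt y0 c0 cs hK] := H.
  exists y, chi; split; last by move=> w; apply: yt.
  split; [split | split; [split |]].
  - by move=> l hl w1 w2 _ _; rewrite !yt.
  - by split=> [t ht|w]; [apply/meas_on_setT/my | apply: y0].
  - by move=> t ht; apply/meas_on_setT/mc.
  - split=> [t w ht|w]; first by rewrite c0 // (hedges_chi_le1 H).
    by rewrite -(big_mkord xpredT (chi^~ w)) cs.
  - by move=> t ht w; apply: hK.
case=> y [chi [[[_ [my y0]] [[mc [c01 cs]] hK]] yt]].
exists y, chi; split => //.
- by move=> s hs; apply/meas_on_setT/my.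
- by move=> s hs; apply/meas_on_setT/mc.
- by move=> s w hs _; case/andP: (c01 s w hs).
- by move=> w _; rewrite (big_mkord xpredT (chi^~ w)).
- by move=> s w hs _; apply: hK.
Qed.

Lemma Zbd0_init_bg : Zbd0 T F pi xi = init_bg T F pi xi.
Proof.
apply: funext => x; apply: propext; rewrite -hedgeable_root; apply: Zrec_hedgeable => //.
by case: hF => _ [_ [_ [_ [-> _]]]]; rewrite inE.
Qed.

End Hedging.

Section Coordinates.
Variables (R : realType) (d : nat).

Lemma e_coord j i : (@e R d j) 0 i = (j == i)%:R.
Proof. by rewrite /e mxE eqxx eq_sym. Qed.

Lemma sum_mul_delta (G : 'I_d -> R) i : \sum_j G j * (i == j)%:R = G i.
Proof.
rewrite (bigD1 i) //= eqxx mulr1 big1 ?addr0 // => k; rewrite eq_sym => /negbTE ->.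
by rewrite mulr0.
Qed.

Lemma cone_comb_coord (a : 'I_d -> R) (b : 'I_d -> 'I_d -> R) (p : 'I_d -> 'I_d -> R) i :
  (\sum_j a j *: @e R d j + \sum_j \sum_k b j k *: (p j k *: @e R d j - @e R d k)) 0 i
  = a i + \sum_k b i k * p i k - \sum_j b j i.
Proof.
rewrite mxE !summxE.
under eq_bigr => j _ do rewrite !mxE eqxx andTb.
rewrite sum_mul_delta -addrA; congr (_ + _).
under eq_bigr => j _ do (rewrite summxE; under eq_bigr => k _ do rewrite !mxE eqxx !andTb mulrBr).
under eq_bigr => j _ do rewrite sumrB.
rewrite sumrB; congr (_ - _); last by apply: eq_bigr => j _; rewrite sum_mul_delta.
rewrite exchange_big /=; apply: eq_bigr => k _.
by under eq_bigr => j _ do rewrite mulrA; rewrite sum_mul_delta.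
Qed.

End Coordinates.

Section Encoding.
Variables (R : realType) (d : nat) (Omega : finType) (T : nat).
Variable F : nat -> {set {set Omega}}.
Variable pi : nat -> Omega -> 'I_d -> 'I_d -> R.
Variable xi : nat -> Omega -> vec R d.
Variable j : 'I_d.

Local Notation vec := (vec R d).
Local Notation inK := (@inK R d Omega pi).

(* Buyer's hedges from [x e^j] whose mixed stopping time is rescaled to total
   mass [eps]; this makes the constraints homogeneous in [(x, eps)]. *)
Definition bg_hedge (x eps : R) := exists (y : nat -> Omega -> vec) (chi : nat -> Omega -> R),
  [/\ is_strategy T F y, forall w, y 0%N w = x *: @e R d j,
      (forall t, (t <= T)%N -> meas F t (chi t)) /\ (forall t w, (t <= T)%N -> 0 <= chi t w),
      forall w, \sum_(t < T.+1) chi t w = eps &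
      forall t, (t <= T)%N -> forall w, inK t w (y t w + chi t w *: xi t w - y t.+1 w)].

Definition same_atom s (w1 w2 : Omega) := [exists l in F s, (w1 \in l) && (w2 \in l)].

Lemma same_atomP s w1 w2 :
  reflect (exists l, [/\ l \in F s, w1 \in l & w2 \in l]) (same_atom s w1 w2).
Proof.
apply: (iffP existsP) => [[l /andP [h1 /andP [h2 h3]]]|[l [h1 h2 h3]]]; exists l => //.
by rewrite h1 h2 h3.
Qed.

(* Unknowns of the linear system describing [bg_hedge]: the strategy [y s w i],
   the stopping time [chi s w], the coefficients [a s w i] and [b s w i k] of
   the solvency cone, and the two scalars [x] and [eps]. *)
Definition var : finType := ((('I_T.+2 * Omega * 'I_d) + ('I_T.+1 * Omega)) +
  (('I_T.+1 * Omega * 'I_d) + ('I_T.+1 * Omega * 'I_d * 'I_d)) + bool)%type.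

Definition vy (s : 'I_T.+2) w i : var := inl (inl (inl (s, w, i))).
Definition vchi (s : 'I_T.+1) w : var := inl (inl (inr (s, w))).
Definition va (s : 'I_T.+1) w i : var := inl (inr (inl (s, w, i))).
Definition vb (s : 'I_T.+1) w i k : var := inl (inr (inr (s, w, i, k))).
Definition vx : var := inr true.
Definition veps : var := inr false.

Definition eq_index : finType := (('I_T.+1 * Omega * Omega * 'I_d) + ((Omega * 'I_d) +
  (('I_T.+1 * Omega * Omega) + (Omega + (('I_T.+1 * Omega * 'I_d) + (Omega * 'I_d))))))%type.

Definition equation (q : eq_index) : (var -> R) -> R :=
  match q with
  | inl (s, w1, w2, i) => fun v => if same_atom s w1 w2 then
      v (vy (inord s.+1) w1 i) - v (vy (inord s.+1) w2 i) else 0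
  | inr (inl (w, i)) => fun v => v (vy (inord T.+1) w i)
  | inr (inr (inl (s, w1, w2))) => fun v =>
      if same_atom s w1 w2 then v (vchi s w1) - v (vchi s w2) else 0
  | inr (inr (inr (inl w))) => fun v => \sum_(s < T.+1) v (vchi s w) - v veps
  | inr (inr (inr (inr (inl (s, w, i))))) => fun v =>
      v (vy (inord s) w i) + v (vchi s w) * xi s w 0 i - v (vy (inord s.+1) w i)
      - (v (va s w i) + \sum_k v (vb s w i k) * pi s w i k - \sum_k v (vb s w k i))
  | inr (inr (inr (inr (inr (w, i))))) => fun v =>
      v (vy (inord 0) w i) - v vx * (i == j)%:R
  end.

Definition ineq_index : finType := (('I_T.+1 * Omega) + (('I_T.+1 * Omega * 'I_d) +
  ('I_T.+1 * Omega * 'I_d * 'I_d)))%type.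

Definition inequation (q : ineq_index) : (var -> R) -> R :=
  match q with
  | inl (s, w) => fun v => v (vchi s w)
  | inr (inl (s, w, i)) => fun v => v (va s w i)
  | inr (inr (s, w, i, k)) => fun v => v (vb s w i k)
  end.

Lemma affine_equation q : affine (equation q).
Proof.
case: q => [[[[s w1] w2] i]|[[w i]|[[[s w1] w2]|[w|[[[s w] i]|[w i]]]]]] /=.
- by case: same_atom; [apply: affine_sub; apply: affine_coord | apply: affine_cst].
- exact: affine_coord.
- by case: same_atom; [apply: affine_sub; apply: affine_coord | apply: affine_cst].
- by apply: affine_sub; [apply: affine_sum => s |]; apply: affine_coord.
- apply: affine_sub; first apply: affine_sub; first apply: affine_add.
  + exact: affine_coord.
  + by apply: affine_mulr; apply: affine_coord.
  + exact: affine_coord.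
  apply: affine_sub; first apply: affine_add.
  + exact: affine_coord.
  + by apply: affine_sum => k; apply: affine_mulr; apply: affine_coord.
  + by apply: affine_sum => k; apply: affine_coord.
- by apply: affine_sub; [apply: affine_coord | apply: affine_mulr; apply: affine_coord].
Qed.

Lemma affine_inequation q : affine (inequation q).
Proof. by case: q => [[s w]|[[[s w] i]|[[[s w] i] k]]]; apply: affine_coord. Qed.

Lemma bg_hedge_of_solution x eps v : v vx = x -> v veps = eps ->
  (forall q, equation q v = 0) -> (forall q, 0 <= inequation q v) -> bg_hedge x eps.
Proof.
move=> hX hE H1 H2.
have Ey (s : 'I_T.+1) w1 w2 (i : 'I_d) : same_atom s w1 w2 ->
    v (vy (inord (val s).+1) w1 i) = v (vy (inord (val s).+1) w2 i).
  by move=> hs; apply: subr0_eq; have := H1 (inl (s, w1, w2, i)); rewrite /= hs.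
have Eyfin w (i : 'I_d) : v (vy (inord T.+1) w i) = 0 := H1 (inr (inl (w, i))).
have Echi (s : 'I_T.+1) w1 w2 : same_atom s w1 w2 -> v (vchi s w1) = v (vchi s w2).
  by move=> hs; apply: subr0_eq; have := H1 (inr (inr (inl (s, w1, w2)))); rewrite /= hs.
have Emass w : \sum_(s < T.+1) v (vchi s w) = eps.
  by rewrite -hE; apply: subr0_eq; apply: (H1 (inr (inr (inr (inl w))))).
have Econe (s : 'I_T.+1) w i :
    v (vy (inord s) w i) + v (vchi s w) * xi s w 0 i - v (vy (inord s.+1) w i)
    = v (va s w i) + \sum_k v (vb s w i k) * pi s w i k - \sum_k v (vb s w k i).
  by apply: subr0_eq; apply: (H1 (inr (inr (inr (inr (inl (s, w, i))))))).
have Einit w (i : 'I_d) : v (vy (inord 0) w i) = x * (i == j)%:R.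
  by rewrite -hX; apply: subr0_eq; apply: (H1 (inr (inr (inr (inr (inr (w, i))))))).
pose y s w : vec := \row_i v (vy (inord s) w i).
pose chi s w := v (vchi (inord s) w).
exists y, chi; split.
- split; first by move=> l hl w1 w2 _ _; apply/rowP => i; rewrite !mxE !Einit.
  split; last by move=> w; apply/rowP => i; rewrite !mxE Eyfin.
  move=> t /andP [t1 tT] l hl w1 w2 h1 h2; apply/rowP => i; rewrite !mxE.
  have ht : (t.-1 < T.+1)%N by lia.
  have := Ey (Ordinal ht) w1 w2 i; rewrite /= (prednK t1); apply.
  by apply/same_atomP; exists l.
- by move=> w; apply/rowP => i; rewrite !mxE Einit eqxx andTb eq_sym.
- split=> [t ht l hl w1 w2 h1 h2|t w ht]; last exact: (H2 (inl (inord t, w))).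
  have := Echi (inord t) w1 w2; rewrite inordK ?ltnS //; apply.
  by apply/same_atomP; exists l.
- by move=> w; rewrite -(Emass w); apply: eq_bigr => s _; rewrite /chi inord_val.
move=> t ht w.
exists (fun i => v (va (inord t) w i)), (fun i k => v (vb (inord t) w i k)); split.
  by move=> i; apply: (H2 (inr (inl (inord t, w, i)))).
split; first by move=> i k; apply: (H2 (inr (inr (inord t, w, i, k)))).
apply/rowP => i; rewrite cone_comb_coord.
have := Econe (inord t) w i; rewrite inordK ?ltnS // => <-.
by rewrite /y /chi !mxE.
Qed.

Lemma solution_of_bg_hedge x eps : bg_hedge x eps ->
  exists v, [/\ v vx = x, v veps = eps, forall q, equation q v = 0 & forall q, 0 <= inequation q v].
Proof.
case=> y [chi [[_ [my y0]] hy0 [mc c0] cs hK]].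
have /choice [AB HAB] : forall p : 'I_T.+1 * Omega,
  exists ab : ('I_d -> R) * ('I_d -> 'I_d -> R),
   [/\ forall i, 0 <= ab.1 i, forall i k, 0 <= ab.2 i k &
     y p.1 p.2 + chi p.1 p.2 *: xi p.1 p.2 - y p.1.+1 p.2 =
     \sum_i ab.1 i *: @e R d i + \sum_i \sum_k ab.2 i k *: (pi p.1 p.2 i k *: @e R d i - @e R d k)].
  move=> [s w]; have hs : (s <= T)%N by rewrite -ltnS ltn_ord.
  by case: (hK s hs w) => a [b [ha [hb he]]]; exists (a, b).
pose v (u : var) : R := match u with
  | inl (inl (inl (s, w, i))) => y s w 0 i
  | inl (inl (inr (s, w))) => chi s w
  | inl (inr (inl (s, w, i))) => (AB (s, w)).1 i
  | inl (inr (inr (s, w, i, k))) => (AB (s, w)).2 i k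
  | inr b => if b then x else eps
  end.
exists v; split => //.
  case=> [[[[s w1] w2] i]|[[w i]|[[[s w1] w2]|[w|[[[s w] i]|[w i]]]]]] /=.
  - have hs := ltn_ord s; case E: same_atom => //.
    have /same_atomP [l [hl h1 h2]] := E.
    rewrite inordK; last by rewrite ltnS.
    by rewrite (my s.+1 _ l hl w1 w2 h1 h2) ?subrr //; apply/andP; split; lia.
  - by rewrite inordK // y0 mxE.
  - have hs := ltn_ord s; case E: same_atom => //.
    have /same_atomP [l [hl h1 h2]] := E.
    by rewrite (mc s _ l hl w1 w2 h1 h2) ?subrr //; lia.
  - by rewrite cs subrr.
  - have hs := ltn_ord s; rewrite !inordK //; last by lia.
    case: (HAB (s, w)) => _ _ /= he.
    by have := congr1 (fun M : vec => M 0 i) he; rewrite cone_comb_coord !mxE => ->; rewrite subrr.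
  - by rewrite inordK // hy0 !mxE eqxx subrr.
case=> [[s w]|[[[s w] i]|[[[s w] i] k]]] /=.
- by apply: c0; rewrite -ltnS ltn_ord.
- by case: (HAB (s, w)).
- by case: (HAB (s, w)).
Qed.

Lemma bg_hedgeP x eps : bg_hedge x eps <->
  exists v, [/\ v vx = x, v veps = eps, forall q, equation q v = 0 & forall q, 0 <= inequation q v].
Proof.
split; first exact: solution_of_bg_hedge.
by case=> v [hx he H1 H2]; apply: bg_hedge_of_solution hx he H1 H2.
Qed.

Lemma polyhedral_bg_hedge_init : polyhedral (fun x => bg_hedge x 1).
Proof.
have := polyhedral_proj_system vx veps 1 affine_equation affine_inequation.
by congr polyhedral; apply: funext => x; apply: propext; rewrite bg_hedgeP.
Qed.

Lemma polyhedral_bg_hedge_mass : polyhedral (fun eps => bg_hedge (-1) eps).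
Proof.
have := polyhedral_proj_system veps vx (-1) affine_equation affine_inequation.
congr polyhedral; apply: funext => eps; apply: propext; rewrite bg_hedgeP.
by split=> -[v [h1 h2 h3 h4]]; exists v.
Qed.

End Encoding.

Section BidPrice.
Variables (R : realType) (d : nat) (Omega : finType) (T : nat).
Variables (F : nat -> {set {set Omega}}) (P : Omega -> R).
Variable pi : nat -> Omega -> 'I_d -> 'I_d -> R.
Variable xi : nat -> Omega -> vec R d.
Variable j : 'I_d.
Hypothesis hF : filtered_space T F P.
Hypothesis hpi : rates_ok T F pi.
Hypothesis hxi : adapted T F xi.

Local Notation vec := (vec R d).
Local Notation inK := (@inK R d Omega pi).
Local Notation bg_hedge := (bg_hedge T F pi xi j).

Lemma bg_hedgeZ x eps c : 0 < c -> bg_hedge x eps -> bg_hedge (c * x) (c * eps).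
Proof.
move=> c0 [y [chi [[my0 [my y0]] hy0 [mc chi0] cs hK]]].
exists (fun s w => c *: y s w), (fun s w => c * chi s w); split.
- split; first exact: meas_map.
  split; first by move=> t ht; apply: meas_map; apply: my.
  by move=> w; rewrite y0 scaler0.
- by move=> w; rewrite hy0 scalerA.
- split=> [t ht|t w ht]; first by apply: meas_map; apply: mc.
  by apply: mulr_ge0; [exact: ltW | exact: chi0].
- by move=> w; rewrite -mulr_sumr cs.
move=> t ht w; rewrite -scalerA -scalerDr -scalerBr.
by apply: inKZ; [exact: ltW | exact: hK].
Qed.

Lemma bg_hedge1_init x : bg_hedge x 1 <-> init_bg T F pi xi (x *: @e R d j).
Proof.
split.
  case=> y [chi [hs hy0 [mc c0] cs hK]]; exists y, chi; do !split => //.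
  move=> t w ht; rewrite c0 //= -(cs w).
  have ht' : (t < T.+1)%N by rewrite ltnS.
  rewrite (bigD1 (Ordinal ht')) //= lerDl sumr_ge0 // => i _; apply: c0.
  by rewrite -ltnS ltn_ord.
case=> y [chi [[hs [[mc [c01 cs]] hK]] hy0]]; exists y, chi; split => //.
by split => // t w ht; case/andP: (c01 t w ht).
Qed.

Lemma no_free_bg_hedge : no_arbitrage T F pi -> ~ bg_hedge (-1) 0.
Proof.
move=> NA [y [chi [[_ [my y0]] hy0 [mc c0] cs hK]]].
have [w0 _] : exists w, w \in [set: Omega]%SET.
  by apply: (atom_n0 hF (leq0n T)); case: hF => _ [_ [_ [_ [-> _]]]]; rewrite inE.
have hK' t : (t <= T)%N -> forall w, inK t w (y t w - y t.+1 w).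
  move=> ht w; have := hK t ht w.
  have ht' : (t < T.+1)%N by rewrite ltnS.
  have -> : chi t w = 0.
    by apply: (psumr_eq0P (i := Ordinal ht') _ (cs w)) => // k _; apply: c0; rewrite -ltnS.
  by rewrite scale0r addr0.
have ye w : y 0%N w = - @e R d j by rewrite hy0 scaleN1r.
apply: NA.
(* Adding [e^j] to the positions at times [1..T] turns the hedge into an
   arbitrage paying [e^j]. *)
exists (fun s w => if s == 0%N then 0 else if (s <= T)%N then y s w + @e R d j else y s w),
  (fun=> @e R d j); split.
  split=> //; split=> [t /andP [t1 tT]|w /=]; last by rewrite ltnn y0.
  rewrite /= gtn_eqF //; case: (t <= T)%N; last by apply: my; rewrite t1 tT.
  by apply: (meas_map (fun v => v + @e R d j)); apply: my; rewrite t1 tT.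
split=> //; split.
  move=> t tT w; have [t0|t0] := eqVneq t 0%N.
    by subst t; rewrite /= tT sub0r opprD addrC -(ye w); apply: (hK' 0%N).
  by rewrite (ltnW tT) tT /= opprD addrACA subrr addr0; apply: hK'; apply: ltnW.
split=> //; split=> [w i|]; first by rewrite e_coord ler0n.
split.
  exists w0; apply/negP => /eqP /(congr1 (fun M : vec => M 0 j)).
  by rewrite e_coord eqxx mxE => /eqP; rewrite oner_eq0.
move=> w; have [T0|T0] := eqVneq T 0%N.
  have y1 : y 1%N w = 0 by have := y0 w; rewrite T0.
  by rewrite T0 /= sub0r -(ye w); have := hK' 0%N (leq0n _) w; rewrite y1 subr0.
by rewrite leqnn /= addrK; have := hK' T (leqnn _) w; rewrite y0 subr0.
Qed.

Lemma inK_shift t w v : exists x, inK t w (x *: @e R d j + v).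
Proof.
pose m k := Num.max 0 (- v 0 k).
have m0 k : 0 <= m k by rewrite le_max lexx.
have mv k : 0 <= v 0 k + m k by rewrite -lerBlDl sub0r le_max lexx orbT.
exists (\sum_k m k * pi t w j k).
exists (fun i => v 0 i + m i), (fun i k => if i == j then m k else 0).
split=> //; split=> [i k|]; first by case: (i == j).
apply/rowP => i; rewrite cone_comb_coord !mxE eqxx /=.
have -> : \sum_l (if l == j then m i else 0) = m i.
  by rewrite (bigD1 j) //= eqxx big1 ?addr0 // => l /negbTE ->.
have [->|ne] := eqVneq i j; first by rewrite mulr1n mulr1; lra.
rewrite mulr0n mulr0 add0r big1 ?addr0; first lra.
by move=> k _; rewrite mul0r.
Qed.

Lemma bg_hedge1_exists : exists x, bg_hedge x 1.
Proof.
have hF0 : F 0%N = [set [set: Omega]]%SET by case: hF => _ [_ [_ [_ [-> _]]]].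
have hT : [set: Omega]%SET \in F 0%N by rewrite hF0 inE.
have [w0 _] : exists w, w \in [set: Omega]%SET by apply: (atom_n0 hF (leq0n T)).
have [x hx] := inK_shift 0%N w0 (xi 0%N w0).
exists x, (fun s w => if s == 0%N then x *: @e R d j else 0), (fun s w => (s == 0%N)%:R); split.
- by split=> //; split=> // t /andP [t1 _] /=; rewrite gtn_eqF.
- by [].
- by split=> [t ht|t w _]; rewrite ?ler0n.
- by move=> w; rewrite big_ord_recl /= big1 ?addr0.
move=> t ht w /=; have [->|t0] := eqVneq t 0%N; last first.
  by rewrite scale0r !addr0 subrr; apply: inK0.
rewrite scale1r subr0 (hxi (leq0n T) hT (w1 := w) (w2 := w0)) ?inE //.
have [mpi _] := hpi (leq0n T).
by move: hx; rewrite /Defs.inK (mpi _ hT w w0) ?inE.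
Qed.

Lemma bg_hedge1_lbound : no_arbitrage T F pi -> exists L, forall r, bg_hedge r 1 -> L <= r.
Proof.
move=> NA; apply: contrapT => unbounded; apply: (no_free_bg_hedge NA).
apply: (polyhedral_closed0 (polyhedral_bg_hedge_mass T F pi xi j)) => e e0.
have [r [Hr hr]] : exists r, bg_hedge r 1 /\ r < - e^-1.
  apply: contrapT => H; apply: unbounded; exists (- e^-1) => r Hr.
  by rewrite leNgt; apply/negP => hr; apply: H; exists r.
have r0 : 0 < - r by rewrite oppr_gt0 (lt_trans hr) // oppr_lt0 invr_gt0.
have c0 : 0 < - r^-1 by rewrite -invrN invr_gt0.
exists (- r^-1); split; first exact: ltW.
  by rewrite -invrN -[e]invrK ltf_pV2 ?posrE ?invr_gt0 // ltrNr.
have rn0 : r != 0 by rewrite -oppr_eq0 gt_eqF.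
by have := bg_hedgeZ c0 Hr; rewrite mulr1 mulNr mulVf.
Qed.

End BidPrice.

Local Open Scope classical_set_scope.

Theorem theorem5p3 (R : realType) (d : nat) (Omega : finType) (T : nat)
  (F : nat -> {set {set Omega}}) (P : Omega -> R)
  (pi : nat -> Omega -> 'I_d -> 'I_d -> R) (xi : nat -> Omega -> vec R d) :
  filtered_space T F P -> rates_ok T F pi -> no_arbitrage T F pi ->
  adapted T F xi ->
  Zbd0 T F pi xi = init_bg T F pi xi /\
  forall j : 'I_d,
    exists p : R,
      bid_price T F pi xi j = p%:E /\
      (exists x : R, Zbd0 T F pi xi (x *: @e R d j) /\ p = - x) /\
      (forall x : R, Zbd0 T F pi xi (x *: @e R d j) -> - x <= p) /\
      (exists y chi, Phi_bg T F pi xi y chi /\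
         forall w, p *: @e R d j = - y 0%N w).
Proof.
move=> hF hpi hNA hxi; have HZ := Zbd0_init_bg pi hF hxi; split=> // j.
have IP x := bg_hedge1_init T F pi xi j x.
have [m [Hm m_min]] := polyhedral_min (polyhedral_bg_hedge_init T F pi xi j)
  (bg_hedge1_exists j hF hpi hxi) (bg_hedge1_lbound xi j hF hNA).
exists (- m); rewrite HZ; split; last split; last split.
- apply/eqP; rewrite eq_le; apply/andP; split.
    by apply: ge_ereal_sup => _ [x /IP /m_min Hx <-]; rewrite lee_fin lerN2.
  by apply: ereal_sup_ubound; exists m => //; apply/IP.
- by exists m; split => //; apply/IP.
- by move=> x /IP /m_min; rewrite lerN2.
have [y [chi [H hy]]] := (IP m).1 Hm.
by exists y, chi; split => // w; rewrite hy scaleNr.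
Qed.
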